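(* Let $\mathsf P=(E,<,\#)$ be a prime event structure and let $\mathcal N(\mathsf P)=\langle S,E,F,I,\emptyset,\mathsf m,\ell\rangle$ be the net with $S=\{(\ast,e)\mid e\in E\}\cup\{(e,\ast)\mid e\in E\}\cup\{(\{e,e'\},\#)\mid e\ \#\ e'\}$, $F=\{(e,(e,\ast))\}_{e\in E}\cup\{((\ast,e),e)\}_{e\in E}\cup\{((W,\#),e)\mid (W,\#)\in S,\ e\in W\}$, $I=\{((\ast,e'),e)\mid e'<e\}$, $\mathsf m=\{(\ast,e)\mid e\in E\}\cup\{(\{e,e'\},\#)\mid e\ \#\ e'\}$, and $\ell$ the identity. Then $\mathcal N(\mathsf P)$ is an occurrence causal net.
   Context: A prime event structure is $\mathsf P=(E,<,\#)$ with $E$ a countable set, $<$ an irreflexive partial order with $\{e'\mid e'<e\}$ finite for each $e$, and $\#$ irreflexive, symmetric and hereditary ($e\ \#\ e'<e''\Rightarrow e\ \#\ e''$). A labelled contextual net $N=\langle S,T,F,I,R,\mathsf m,\ell\rangle$ has disjoint places $S$ and transitions $T$, flow $F\subseteq(S\times T)\cup(T\times S)$, inhibitor arcs $I\subseteq S\times T$, read arcs $R\subseteq S\times T$, initial marking $\mathsf m$, total labelling $\ell:T\to L$; ${}^\bullet x,x^\bullet$ pre/postsets, ${}^\circ t=\{s\mid(s,t)\in I\}$, $\underline t=\{s\mid(s,t)\in R\}$; every transition has nonempty preset; $t$ enabled at $m$ if ${}^\bullet t+\underline t\subseteq m$ and $m(s)=0$ for $s\in{}^\circ t$; firing gives $m-{}^\bullet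 t+t^\bullet$. States are multisets of transitions of finite firing sequences from $\mathsf m$; $\lfloor X\rfloor$ is the support. Nets are assumed safe. $<_N$ is the transitive closure of $F$. $t\prec_N t'$ iff ${}^\bullet t\cap{}^\circ t'\neq\emptyset$ or $t^\bullet\cap\underline{t'}\neq\emptyset$; $t\ \#_N\ t'$ iff no state contains both. Pre-causal: (1) $<_N\cap(T\times T)=\emptyset$, ${}^\bullet t\cap{}^\circ t=\emptyset$, $t^\bullet\cap\underline t=\emptyset$; (2) $|\ell(s^\bullet)|=1$ for $s\in{}^\circ t$; (3) $t\prec_N t'\Rightarrow$ not $t'\prec_N t$; (4) ${}^\circ t\cup\underline t$ finite; (5) $t\ \#_N\ t'\Rightarrow{}^\bullet t\cap{}^\bullet t'\neq\emptyset$; (6) $t\neq t'$, $\ell(t)=\ell(t')\Rightarrow t\ \#_N\ t'$. Causal net: pre-causal with (a) $\prec^*$ restricted to each state's support a partial order and (b) each transition in some state's support. An occurrence causal net is a causal net $K$ with $R=\emptyset$, $\ell$ injective, $\prec_K^{*}$ a partial order on $T$, and $t\ \#_K\ t'\prec_K^{*}t''$ implying $t\ \#_K\ t''$. *)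

From Stdlib Require Import List Relations.
Import ListNotations.

Set Implicit Arguments.

Definition is_pes (E : Type) (lt cf : E -> E -> Prop) : Prop :=
  (exists f : E -> nat, forall x y, f x = f y -> x = y)
  /\ (forall e, ~ lt e e)
  /\ (forall e1 e2 e3, lt e1 e2 -> lt e2 e3 -> lt e1 e3)
  /\ (forall e, exists l : list E, forall e', lt e' e -> In e' l)
  /\ (forall e, ~ cf e e)
  /\ (forall e e', cf e e' -> cf e' e)
  /\ (forall e e' e'', cf e e' -> lt e' e'' -> cf e e'').

(* Places are the type S, transitions the type T (disjoint by construction). *)
Record cnet (S T L : Type) := CNet {
  pre  : S -> T -> Prop;   (* (s,t) in F *)
  post : T -> S -> Prop;   (* (t,s) in F *)
  inh  : S -> T -> Prop;
  rd   : S -> T -> Prop;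
  m0   : S -> nat;
  lab  : T -> L
}.

Section Nets.
Variables (S T L : Type) (N : cnet S T L).

Definition ind (P : Prop) (n : nat) : Prop := (P /\ n = 1) \/ (~ P /\ n = 0).

Definition enabled (m : S -> nat) (t : T) : Prop :=
  (forall s a b, ind (pre N s t) a -> ind (rd N s t) b -> a + b <= m s)
  /\ (forall s, inh N s t -> m s = 0).

Definition fire (m : S -> nat) (t : T) (m' : S -> nat) : Prop :=
  enabled m t /\
  (forall s a b, ind (pre N s t) a -> ind (post N t s) b -> m' s = m s - a + b).

Inductive reach : list T -> (S -> nat) -> Prop :=
| reach_nil : reach [] (m0 N)
| reach_snoc sg m t m' : reach sg m -> fire m t m' -> reach (sg ++ [t]) m'.

Inductive occ : list T -> T -> nat -> Prop :=
| occ_nil t : occ [] t 0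
| occ_hit t l n : occ l t n -> occ (t :: l) t (Datatypes.S n)
| occ_miss t u l n : u <> t -> occ l t n -> occ (u :: l) t n.

Definition state (X : T -> nat) : Prop :=
  exists sg m, reach sg m /\ forall t, occ sg t (X t).

Definition supp (X : T -> nat) (t : T) : Prop := 0 < X t.

Definition safe : Prop := forall sg m, reach sg m -> forall s, m s <= 1.

Definition nonempty_presets : Prop := forall t, exists s, pre N s t.

Definition flow (x y : S + T) : Prop :=
  match x, y with
  | inl s, inr t => pre N s t
  | inr t, inl s => post N t s
  | _, _ => False
  end.
Definition ltN : relation (S + T) := clos_trans _ flow.

Definition precN (t t' : T) : Prop :=
  (exists s, pre N s t /\ inh N s t') \/ (exists s, post N t s /\ rd N s t').

Definition cfN (t t' : T) : Prop :=
  ~ exists X, state X /\ supp X t /\ supp X t'.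

Definition partial_order_on (D : T -> Prop) (r : relation T) : Prop :=
  (forall t, D t -> r t t)
  /\ (forall t1 t2 t3, D t1 -> D t2 -> D t3 -> r t1 t2 -> r t2 t3 -> r t1 t3)
  /\ (forall t1 t2, D t1 -> D t2 -> r t1 t2 -> r t2 t1 -> t1 = t2).

Definition finite_set (P : S -> Prop) : Prop :=
  exists l : list S, forall s, P s -> In s l.

Definition pre_causal : Prop :=
  (forall t t', ~ ltN (inr t) (inr t'))
  /\ (forall t, ~ exists s, pre N s t /\ inh N s t)
  /\ (forall t, ~ exists s, post N t s /\ rd N s t)
  /\ (forall s t, inh N s t ->
        exists a, (exists t', pre N s t' /\ lab N t' = a)
                  /\ forall t', pre N s t' -> lab N t' = a)
  /\ (forall t t', precN t t' -> ~ precN t' t)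
  /\ (forall t, finite_set (fun s => inh N s t \/ rd N s t))
  /\ (forall t t', cfN t t' -> exists s, pre N s t /\ pre N s t')
  /\ (forall t t', t <> t' -> lab N t = lab N t' -> cfN t t').

Definition precN_star_in (X : T -> nat) : relation T :=
  clos_refl_trans _ (fun t t' => supp X t /\ supp X t' /\ precN t t').

Definition causal_net : Prop :=
  pre_causal
  /\ (forall X, state X -> partial_order_on (supp X) (precN_star_in X))
  /\ (forall t, exists X, state X /\ supp X t).

Definition occurrence_causal_net : Prop :=
  nonempty_presets /\ safe
  /\ causal_net
  /\ (forall s t, ~ rd N s t)
  /\ (forall t t', lab N t = lab N t' -> t = t')
  /\ partial_order_on (fun _ => True) (clos_refl_trans _ precN)
  /\ (forall t t' t'', cfN t t' -> clos_refl_trans _ precN t' t'' -> cfN t t'').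

End Nets.

Section NP.
Variables (E : Type) (lt cf : E -> E -> Prop).

(* raw places: PStar e = (*,e), PDone e = (e,*), PCf W = (W,#) *)
Inductive rplace : Type :=
| PStar : E -> rplace
| PDone : E -> rplace
| PCf : (E -> Prop) -> rplace.

Definition is_place (p : rplace) : Prop :=
  match p with
  | PCf W => exists e e', cf e e' /\ forall x, W x <-> (x = e \/ x = e')
  | _ => True
  end.

Definition place : Type := { p : rplace | is_place p }.

Definition NP_pre (s : place) (e : E) : Prop :=
  match proj1_sig s with
  | PStar e' => e' = e
  | PDone _ => False
  | PCf W => W e
  end.

Definition NP_post (e : E) (s : place) : Prop := proj1_sig s = PDone e.

Definition NP_inh (s : place) (e : E) : Prop :=
  exists e', proj1_sig s = PStar e' /\ lt e' e.

Definition NP_rd (s : place) (e : E) : Prop := False.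

Definition NP_m0 (s : place) : nat :=
  match proj1_sig s with
  | PStar _ => 1
  | PDone _ => 0
  | PCf _ => 1
  end.

Definition NP : cnet place E E :=
  CNet NP_pre NP_post NP_inh NP_rd NP_m0 (fun e => e).

End NP.

(* The proof rests on an exact description of the behaviour of N(P).  For a
   set X of events, [marking_of X] is the marking obtained by firing exactly
   the events of X.  At such a marking an event e is enabled iff it is
   [firable] after X (not yet fired, all its causes fired, no conflict with
   X), and firing it yields [marking_of (X + e)].  By induction on firing
   sequences, the reachable markings are the canonical markings of finite
   configurations (downward closed, conflict-free sets), and conversely every
   finite configuration is fired by some sequence (fire a maximal event
   last).  Hence states of N(P) are exactly finite configurations, so that the
   conflict of N(P) is the conflict # of P and its causality (inhibitor arcs)
   is the causality < of P; the flow relation has no transition-to-transition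
   paths since output places (e,* ) are sinks. *)

From Stdlib Require Import List Relations.
From Stdlib Require Import Classical ClassicalEpsilon FunctionalExtensionality
  PropExtensionality Lia.
Import ListNotations.

Set Implicit Arguments.

Definition indic (P : Prop) : nat :=
  if excluded_middle_informative P then 1 else 0.

Lemma indic_true (P : Prop) : P -> indic P = 1.
Proof. unfold indic; destruct excluded_middle_informative; tauto. Qed.

Lemma indic_false (P : Prop) : ~ P -> indic P = 0.
Proof. unfold indic; destruct excluded_middle_informative; tauto. Qed.

Lemma indic_le_1 (P : Prop) : indic P <= 1.
Proof. unfold indic; destruct excluded_middle_informative; lia. Qed.

Lemma ind_indic (P : Prop) (n : nat) : ind P n -> n = indic P.
Proof.
  intros [[HP ->] | [HP ->]]; [rewrite indic_true | rewrite indic_false]; auto.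
Qed.

Lemma indic_ind (P : Prop) : ind P (indic P).
Proof.
  destruct (classic P) as [HP | HP];
    [left; rewrite indic_true | right; rewrite indic_false]; auto.
Qed.

Lemma indic_iff (P Q : Prop) : (P <-> Q) -> indic P = indic Q.
Proof. intro H; rewrite (propositional_extensionality P Q H); reflexivity. Qed.

Section NetSemantics.
Variables (S T L : Type) (N : cnet S T L).

Lemma fire_iff (m : S -> nat) (t : T) (m' : S -> nat) :
  fire N m t m' <->
  enabled N m t /\
  forall s, m' s = m s - indic (pre N s t) + indic (post N t s).
Proof.
  split; intros [Hen Hm]; split; auto.
  - intro s; apply Hm; apply indic_ind.
  - intros s a b Ha Hb; rewrite (ind_indic Ha), (ind_indic Hb); apply Hm.
Qed.

Lemma enabled_iff (m : S -> nat) (t : T) :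
  (forall s, ~ rd N s t) ->
  enabled N m t <->
  (forall s, pre N s t -> 1 <= m s) /\ (forall s, inh N s t -> m s = 0).
Proof.
  intro Hrd; split; intros [Hpre Hinh]; split; auto.
  - intros s Hs. apply (Hpre s 1 0); [left | right]; auto.
  - intros s a b Ha Hb.
    rewrite (ind_indic Ha), (ind_indic Hb), (indic_false (Hrd s)).
    destruct (classic (pre N s t)) as [Hs | Hs];
      [rewrite indic_true; auto; specialize (Hpre s Hs) | rewrite indic_false];
      auto; lia.
Qed.

Lemma occ_pos_iff_In (l : list T) (t : T) (n : nat) :
  occ l t n -> (0 < n <-> In t l).
Proof.
  induction 1 as [| t l n _ IH | t u l n Hne _ IH]; simpl.
  - split; [lia | tauto].
  - split; [auto | lia].
  - rewrite IH; intuition congruence.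
Qed.

Lemma occ_NoDup (l : list T) :
  NoDup l -> forall t, occ l t (indic (In t l)).
Proof.
  induction 1 as [| x l Hx Hnd IH]; intro t.
  - rewrite indic_false by (intros []); constructor.
  - destruct (classic (x = t)) as [<- | Hne].
    + rewrite indic_true by (left; reflexivity).
      rewrite <- (indic_false Hx); constructor; apply IH.
    + rewrite (indic_iff (Q := In t l)) by (simpl; intuition).
      constructor; auto.
Qed.

Lemma state_of_reach (sg : list T) (m : S -> nat) :
  NoDup sg -> reach N sg m ->
  exists X, state N X /\ forall t, supp X t <-> In t sg.
Proof.
  intros Hnd Hr. exists (fun t => indic (In t sg)). split.
  - exists sg, m; split; auto. apply occ_NoDup; auto.
  - intro t; unfold supp; destruct (classic (In t sg)) as [H | H];
      [rewrite indic_true | rewrite indic_false]; intuition lia.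
Qed.

Lemma reach_of_state (X : T -> nat) :
  state N X -> exists sg m, reach N sg m /\ forall t, supp X t <-> In t sg.
Proof.
  intros [sg [m [Hr Hocc]]]. exists sg, m; split; auto.
  intro t; exact (occ_pos_iff_In (Hocc t)).
Qed.

End NetSemantics.

Section StrictOrders.
Variables (A : Type) (lt : A -> A -> Prop).
Hypothesis lt_irrefl : forall a, ~ lt a a.
Hypothesis lt_trans : forall a b c, lt a b -> lt b c -> lt a c.

Lemma maximal_in_list (l : list A) :
  l <> [] -> exists x, In x l /\ forall y, In y l -> ~ lt x y.
Proof.
  induction l as [| a l IH]; intro Hne; [congruence |].
  destruct (classic (l = [])) as [-> | Hl].
  - exists a; split; [left; auto |]. intros y [<- | []]; auto.
  - destruct (IH Hl) as [x [Hx Hmax]].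
    destruct (classic (lt x a)) as [Hxa | Hxa].
    + exists a; split; [left; auto |].
      intros y [<- | Hy] Hay; [exact (lt_irrefl Hay) | exact (Hmax y Hy (lt_trans Hxa Hay))].
    + exists x; split; [right; auto |]. intros y [<- | Hy]; auto.
Qed.

Lemma clos_rt_below (r : relation A) :
  (forall a b, r a b -> lt a b) ->
  forall a b, clos_refl_trans _ r a b -> a = b \/ lt a b.
Proof.
  intros Hr a b H.
  induction H as [a b H | a | a b c _ IHab _ IHbc]; auto.
  destruct IHab as [<- | Hab]; destruct IHbc as [<- | Hbc]; eauto.
Qed.

Lemma clos_rt_partial_order (r : relation A) (D : A -> Prop) :
  (forall a b, r a b -> lt a b) -> partial_order_on D (clos_refl_trans _ r).
Proof.
  intro Hr. split; [| split].
  - intros; apply rt_refl.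
  - intros; eapply rt_trans; eauto.
  - intros a b _ _ Hab Hba.
    destruct (clos_rt_below Hr Hab) as [? | Hab']; auto.
    destruct (clos_rt_below Hr Hba) as [? | Hba']; auto.
    destruct (lt_irrefl (lt_trans Hab' Hba')).
Qed.

End StrictOrders.

Lemma list_of_subset (A : Type) (P : A -> Prop) (l : list A) :
  (forall x, P x -> In x l) -> exists l', forall x, In x l' <-> P x.
Proof.
  intro Hl.
  exists (filter (fun x => if excluded_middle_informative (P x) then true else false) l).
  intro x; rewrite filter_In.
  destruct excluded_middle_informative as [HP | HP]; split.
  - tauto.
  - intuition.
  - intros [_ H]; discriminate H.
  - tauto.
Qed.

Section NetOfPES.
Variables (E : Type) (lt cf : E -> E -> Prop).
Local Notation N := (NP lt cf).

Definition pstar (e : E) : place cf := exist _ (PStar e) I.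
Definition pconflict (e e' : E) (H : cf e e') : place cf :=
  exist _ (PCf (fun x => x = e \/ x = e'))
    (ex_intro _ e (ex_intro _ e' (conj H (fun x => iff_refl _)))).

Definition marking_of (X : E -> Prop) (s : place cf) : nat :=
  match proj1_sig s with
  | PStar e => 1 - indic (X e)
  | PDone e => indic (X e)
  | PCf W => 1 - indic (exists z, X z /\ W z)
  end.

Definition firable (X : E -> Prop) (e : E) : Prop :=
  ~ X e /\ (forall x, lt x e -> X x) /\ (forall z, X z -> ~ cf z e /\ ~ cf e z).

Definition configuration (X : E -> Prop) : Prop :=
  (forall x y, X y -> lt x y -> X x) /\ (forall x y, X x -> X y -> ~ cf x y).

Local Ltac simpl_net :=
  cbn [pre post inh rd m0 NP NP_pre NP_post NP_inh NP_m0 lab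
       marking_of pstar pconflict proj1_sig] in *;
  unfold NP_post, NP_rd in *; cbn [proj1_sig] in *.

Lemma marking_of_ext (X Y : E -> Prop) :
  (forall e, X e <-> Y e) -> marking_of X = marking_of Y.
Proof.
  intro H.
  replace Y with X; auto.
  extensionality e; apply propositional_extensionality; auto.
Qed.

Lemma marking_of_le_1 (X : E -> Prop) (s : place cf) : marking_of X s <= 1.
Proof.
  unfold marking_of; destruct (proj1_sig s); [lia | apply indic_le_1 | lia].
Qed.

Lemma conflict_place_unused (X : E -> Prop) (e : E) (W : E -> Prop) :
  firable X e -> is_place cf (PCf W) -> W e -> ~ exists z, X z /\ W z.
Proof.
  intros [He [_ Hcf]] [a [b [Hab HW]]] We [z [Xz Wz]].
  destruct (Hcf z Xz) as [Hze Hez].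
  apply HW in We; apply HW in Wz.
  destruct We as [-> | ->]; destruct Wz as [-> | ->]; tauto.
Qed.

Lemma enabled_marking_of (X : E -> Prop) (e : E) :
  enabled N (marking_of X) e <-> firable X e.
Proof.
  rewrite enabled_iff by (intros s []). split.
  - intros [Hpre Hinh]; split; [| split].
    + intro He. specialize (Hpre (pstar e) eq_refl); simpl_net.
      rewrite indic_true in Hpre; auto; lia.
    + intros x Hx. specialize (Hinh (pstar x) (ex_intro _ x (conj eq_refl Hx))).
      simpl_net. apply NNPP; intro Hnx; rewrite indic_false in Hinh; auto; lia.
    + intros z Xz; split; intro Hc;
        [specialize (Hpre (pconflict Hc) (or_intror eq_refl))
        | specialize (Hpre (pconflict Hc) (or_introl eq_refl))];
        simpl_net; rewrite indic_true in Hpre; eauto; lia.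
  - intros Hf; split.
    + intros [[x | x | W] Hp] Hpre; simpl_net; try contradiction.
      * subst x; rewrite indic_false; [lia | apply Hf].
      * rewrite indic_false; [lia | exact (conflict_place_unused Hf Hp Hpre)].
    + intros [p Hp] [x [Hx Hlt]]; simpl_net; subst p; simpl_net.
      rewrite indic_true; [lia | apply Hf; auto].
Qed.
Lemma marking_of_step (X : E -> Prop) (e : E) :
  firable X e -> forall s,
  marking_of (fun x => X x \/ x = e) s =
  marking_of X s - indic (pre N s e) + indic (post N e s).
Proof.
  intros Hf [[x | x | W] Hp]; simpl_net.
  - rewrite (@indic_false (PStar x = PDone e)) by discriminate.
    destruct (classic (x = e)) as [-> | Hne].
    + rewrite indic_true, indic_false, indic_true by (apply Hf || auto); lia.
    + rewrite (indic_iff (Q := X x)), (indic_false Hne) by tauto; lia.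
  - rewrite (@indic_false False) by tauto.
    destruct (classic (x = e)) as [-> | Hne].
    + rewrite indic_true, indic_false, indic_true by (apply Hf || auto); lia.
    + rewrite (indic_iff (Q := X x)), (@indic_false (PDone x = PDone e))
        by (tauto || congruence); lia.
  - rewrite (@indic_false (PCf W = PDone e)) by discriminate.
    destruct (classic (W e)) as [We | We].
    + rewrite (indic_true We), (indic_false (conflict_place_unused Hf Hp We)).
      rewrite indic_true by (exists e; auto); lia.
    + rewrite (indic_false We).
      rewrite (indic_iff (Q := exists z, X z /\ W z)); [lia |].
      split; intros [z [Hz Wz]]; exists z; intuition congruence.
Qed.

Lemma fire_marking_of (X : E -> Prop) (e : E) (m' : place cf -> nat) :
  fire N (marking_of X) e m' <->
  firable X e /\ m' = marking_of (fun x => X x \/ x = e).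
Proof.
  rewrite fire_iff, enabled_marking_of.
  split; intros [Hf Hm]; split; auto.
  - extensionality s; rewrite marking_of_step; auto.
  - intro s; subst m'; apply marking_of_step; auto.
Qed.

Lemma marking_of_initial : m0 N = marking_of (fun _ => False).
Proof.
  extensionality s; destruct s as [[x | x | W] Hp]; simpl_net;
    rewrite indic_false; firstorder.
Qed.

Lemma precN_iff (t t' : E) : precN N t t' <-> lt t t'.
Proof.
  split.
  - intros [[[[x | x | W] Hp] [Hpre [y [Hy Hlt]]]] | [s [_ []]]];
      simpl_net; try contradiction; try discriminate.
    injection Hy as <-; subst; auto.
  - intro H; left; exists (pstar t); split; [reflexivity | exists t; auto].
Qed.

Lemma post_place_is_sink (t u : E) (s : place cf) :
  post N t s -> ~ pre N s u.
Proof. destruct s as [p Hp]; intros Hpost; simpl_net; subst p; simpl_net; tauto. Qed.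

Lemma no_flow_between_transitions (t t' : E) : ~ ltN N (inr t) (inr t').
Proof.
  unfold ltN; rewrite clos_trans_t1n_iff; intro H.
  remember (inr t) as x eqn:Hx; remember (inr t') as y eqn:Hy.
  destruct H as [y Hflow | y z Hflow Hrest]; subst x.
  - subst y; exact Hflow.
  - destruct y as [s | u]; [| contradiction].
    destruct Hrest as [z Hflow' | z w Hflow' _];
      destruct z as [s' | u]; try contradiction;
      exact (@post_place_is_sink t u s Hflow Hflow').
Qed.

Lemma conflict_shares_place (t t' : E) :
  cf t t' -> exists s, pre N s t /\ pre N s t'.
Proof. intro Hc; exists (pconflict Hc); simpl_net; auto. Qed.

Hypothesis Hpes : is_pes lt cf.

Let lt_irrefl : forall e, ~ lt e e.
Proof. apply Hpes. Qed.
Let lt_trans : forall e1 e2 e3, lt e1 e2 -> lt e2 e3 -> lt e1 e3.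
Proof. apply Hpes. Qed.
Let finite_causes : forall e, exists l, forall e', lt e' e -> In e' l.
Proof. apply Hpes. Qed.
Let cf_irrefl : forall e, ~ cf e e.
Proof. apply Hpes. Qed.
Let cf_sym : forall e e', cf e e' -> cf e' e.
Proof. apply Hpes. Qed.
Let cf_hered : forall e e' e'', cf e e' -> lt e' e'' -> cf e e''.
Proof. apply Hpes. Qed.

Lemma reach_configuration (sg : list E) (m : place cf -> nat) :
  reach N sg m ->
  NoDup sg /\ configuration (fun x => In x sg) /\ m = marking_of (fun x => In x sg).
Proof.
  induction 1 as [| sg m e m' _ [Hnd [[Hdown Hfree] ->]] Hfire].
  - split; [constructor | split; [split; simpl; tauto | apply marking_of_initial]].
  - apply fire_marking_of in Hfire as [[He [Hcauses Hcf]] ->].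
    split; [| split; [split |]].
    + apply NoDup_app; auto using NoDup_cons, NoDup_nil.
      intros x Hx [-> | []]; contradiction.
    + intros x y; rewrite !in_app_iff; intros [Hy | [<- | []]] Hxy; eauto.
    + intros x y; rewrite !in_app_iff; simpl.
      intros [Hx | [<- | []]] [Hy | [<- | []]];
        [apply Hfree | apply (Hcf x) | apply (Hcf y) | apply cf_irrefl]; auto.
    + apply marking_of_ext; intro x; rewrite in_app_iff; simpl; intuition.
Qed.

(* Conversely, every finite configuration is fired by some firing sequence:
   fire a configuration without one of its maximal events, then that event. *)
Lemma configuration_reach (D : list E) :
  configuration (fun x => In x D) ->
  exists sg m, reach N sg m /\ forall x, In x sg <-> In x D.
Proof.
  remember (length D) as n eqn:Hn; revert D Hn.
  induction n as [n IH] using (well_founded_induction Wf_nat.lt_wf).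
  intros D -> [Hdown Hfree].
  destruct (classic (D = [])) as [-> | Hne].
  { exists [], (m0 N); split; [constructor | tauto]. }
  destruct (maximal_in_list lt lt_irrefl lt_trans Hne) as [x [Hx Hmax]].
  set (eq_dec := fun a b : E => excluded_middle_informative (a = b)).
  set (D' := remove eq_dec x D).
  assert (HD' : forall y, In y D' <-> In y D /\ y <> x).
  { intro y; split; [apply in_remove | intros []; apply in_in_remove; auto]. }
  destruct (IH (length D') (remove_length_lt eq_dec D x Hx) D' eq_refl)
    as [sg [m [Hr Hsg]]].
  { split.
    - intros y z; rewrite !HD'; intros [Hz Hzx] Hyz; split; eauto.
      intros ->; exact (Hmax z Hz Hyz).
    - intros y z; rewrite !HD'; intros [Hy _] [Hz _]; auto. }
  assert (Hfirable : firable (fun y => In y sg) x).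
  { split; [| split]; [rewrite Hsg, HD'; tauto | |].
    - intros y Hy; apply Hsg, HD'; split; eauto.
      intros ->; exact (lt_irrefl Hy).
    - intros y Hy; rewrite Hsg, HD' in Hy; split; apply Hfree; tauto. }
  destruct (reach_configuration Hr) as [_ [_ ->]].
  exists (sg ++ [x]), (marking_of (fun y => In y sg \/ y = x)); split.
  - econstructor; [exact Hr | apply fire_marking_of; auto].
  - intro y; rewrite in_app_iff, Hsg, HD'; simpl.
    destruct (classic (y = x)); intuition (subst; auto).
Qed.

Lemma state_configuration (X : E -> nat) :
  state N X -> configuration (supp X).
Proof.
  intro HX; destruct (reach_of_state HX) as [sg [m [Hr Hsupp]]].
  destruct (reach_configuration Hr) as [_ [[Hdown Hfree] _]].
  split; intros x y; rewrite !Hsupp; eauto.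
Qed.

Lemma configuration_state (D : list E) :
  configuration (fun x => In x D) ->
  exists X, state N X /\ forall x, supp X x <-> In x D.
Proof.
  intro HD; destruct (configuration_reach D HD) as [sg [m [Hr Hsg]]].
  destruct (reach_configuration Hr) as [Hnd _].
  destruct (state_of_reach Hnd Hr) as [X [HX Hsupp]].
  exists X; split; auto. intro x; rewrite Hsupp; auto.
Qed.

Lemma cf_upward (x y u v : E) :
  cf x y -> lt x u \/ x = u -> lt y v \/ y = v -> cf u v.
Proof.
  intros Hxy Hu Hv.
  assert (Hxv : cf x v) by (destruct Hv as [Hv | <-]; eauto).
  apply cf_sym; destruct Hu as [Hu | <-]; eauto.
Qed.

(* Two non-conflicting events occur together in some state: the causes of
   both form a finite configuration. *)
Lemma consistent_pair_in_state (t t' : E) :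
  ~ cf t t' -> exists X, state N X /\ supp X t /\ supp X t'.
Proof.
  intro Hc.
  destruct (finite_causes t) as [l1 Hl1], (finite_causes t') as [l2 Hl2].
  destruct (list_of_subset (fun x => exists u, (u = t \/ u = t') /\ (lt x u \/ x = u))
              (t :: t' :: l1 ++ l2)) as [D HD].
  { intros x [u [[-> | ->] [Hlt | ->]]]; simpl; rewrite in_app_iff; auto. }
  destruct (configuration_state D) as [X [HX Hsupp]].
  - split; intros x y; rewrite !HD.
    + intros [u [Hu Hyu]] Hxy; exists u; split; auto.
      left; destruct Hyu as [Hyu | <-]; eauto.
    + intros [u [Hu Hxu]] [v [Hv Hyv]] Hxy.
      pose proof (cf_upward Hxy Hxu Hyv) as Huv.
      destruct Hu as [-> | ->], Hv as [-> | ->];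
        [exact (cf_irrefl Huv) | exact (Hc Huv)
        | exact (Hc (cf_sym Huv)) | exact (cf_irrefl Huv)].
  - exists X; split; auto.
    split; apply Hsupp, HD; [exists t | exists t']; auto.
Qed.

Lemma cfN_iff (t t' : E) : cfN N t t' <-> cf t t'.
Proof.
  split.
  - intro Hn; apply NNPP; intro Hc; apply Hn.
    exact (consistent_pair_in_state Hc).
  - intros Hc [X [HX [Ht Ht']]].
    exact (proj2 (state_configuration HX) t t' Ht Ht' Hc).
Qed.

(* N(P) is safe: every reachable marking is a canonical marking. *)
Lemma NP_safe : safe N.
Proof.
  intros sg m Hr s; destruct (reach_configuration Hr) as [_ [_ ->]].
  apply marking_of_le_1.
Qed.

Lemma NP_pre_causal : pre_causal N.
Proof.
  split; [| split; [| split; [| split; [| split; [| split; [| split]]]]]].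
  - exact no_flow_between_transitions.
  - intros t Hs; apply (lt_irrefl (e := t)), precN_iff; left; exact Hs.
  - intros t [s [_ []]].
  - intros [p Hp] t [x [Hx _]]; simpl_net; subst p; exists x; split.
    + exists x; simpl_net; auto.
    + intros t' Ht'; simpl_net; auto.
  - intros t t' H1 H2; apply precN_iff in H1, H2; exact (lt_irrefl (lt_trans H1 H2)).
  - intro t; destruct (finite_causes t) as [l Hl]; exists (map pstar l).
    intros [p Hp] [[x [Hx Hlt]] | []]; simpl_net; subst p.
    destruct Hp; change (In (pstar x) (map pstar l)); apply in_map; auto.
  - intros t t' Hc; apply conflict_shares_place, cfN_iff; auto.
  - intros t t' Hne Hl; simpl_net; contradiction.
Qed.

(* Causality on N(P) is contained in the strict order lt, hence acyclic. *)
Lemma NP_causal_net : causal_net N.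
Proof.
  split; [exact NP_pre_causal | split].
  - intros X _; apply (clos_rt_partial_order lt lt_irrefl lt_trans).
    intros a b [_ [_ H]]; apply precN_iff; auto.
  - intro t; destruct (consistent_pair_in_state (cf_irrefl (e := t))) as [X [HX [Ht _]]].
    eauto.
Qed.

Lemma cfN_hereditary (t t' t'' : E) :
  cfN N t t' -> clos_refl_trans _ (precN N) t' t'' -> cfN N t t''.
Proof.
  rewrite !cfN_iff; intros Hc Hrt.
  assert (Hprec : forall a b, precN N a b -> lt a b) by (intros; apply precN_iff; auto).
  destruct (clos_rt_below lt lt_trans Hprec Hrt) as [<- | Hlt]; eauto.
Qed.

End NetOfPES.

Theorem mainTheorem13 (E : Type) (lt cf : E -> E -> Prop) :
  is_pes lt cf -> occurrence_causal_net (NP lt cf).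
Proof.
  intro Hpes; pose proof Hpes as (_ & Hirr & Htr & _).
  split; [| split; [| split; [| split; [| split; [| split]]]]].
  - intro t; exists (pstar cf t); reflexivity.
  - exact (NP_safe Hpes).
  - exact (NP_causal_net Hpes).
  - intros s t [].
  - intros t t' H; exact H.
  - apply (clos_rt_partial_order lt Hirr Htr); intros a b; apply precN_iff.
  - exact (cfN_hereditary Hpes).
Qed.
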